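(* Let $C=C(m,n;k,l;c,d)$ be a $C$-shaped supergrid graph with $a=m-k=1$, and let $s,t$ be two distinct vertices of $C$ (labeled so that $s_x\leq t_x$) such that $(C,s,t)$ satisfies none of the conditions: (F1) $s$ or $t$ is a cut vertex of $C$, or $\{s,t\}$ is a vertex cut of $C$; (F3) there is a vertex $w\in V(C)$ with $\deg(w)=1$, $w\neq s$, $w\neq t$; (F9) $a=1$, and ($s_y,t_y\leq c$ or $s_y,t_y>c+l$). Then $C$ contains a Hamiltonian path from $s$ to $t$.
   Context: The supergrid graph $S^\infty$ has vertex set $\mathbb{Z}^2$, two distinct vertices $u,v$ being adjacent iff $|u_x-v_x|\leq 1$ and $|u_y-v_y|\leq 1$; a supergrid graph is a finite vertex-induced subgraph of $S^\infty$. For integers $m\geq 2$, $n\geq 3$, $k,l,c\geq 1$ with $d=n-l-c\geq 1$ and $a=m-k\geq 1$, $C(m,n;k,l;c,d)$ is the supergrid graph induced by $\{(x,y):1\leq x\leq m,\ 1\leq y\leq n\}\setminus\{(x,y): a+1\leq x\leq m,\ c+1\leq y\leq c+l\}$. A cut vertex $v$: $C-v$ disconnected; a vertex cut $V_1$: $C-V_1$ disconnected. A Hamiltonian path from $s$ to $t$ is a simple path from $s$ to $t$ visiting every vertex exactly once. *)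

(* Vertices of C(m,n;k,l;c,d) are pairs of naturals (x,y);
   all of them have positive coordinates, so nat is adequate for Z^2 here. *)
From mathcomp Require Import all_boot.
Set Implicit Arguments. Unset Strict Implicit. Unset Printing Implicit Defensive.

Definition vtx := (nat * nat)%type.

Definition sadj (u v : vtx) : bool :=
  [&& u != v, u.1 <= v.1 + 1, v.1 <= u.1 + 1, u.2 <= v.2 + 1 & v.2 <= u.2 + 1].

Definition inC (m n k l c : nat) (v : vtx) : bool :=
  [&& 1 <= v.1 <= m, 1 <= v.2 <= n &
      ~~ ((m - k + 1 <= v.1 <= m) && (c + 1 <= v.2 <= c + l))].

Definition box (m n : nat) : seq vtx :=
  [seq (x, y) | x <- iota 1 m, y <- iota 1 n].

Definition degC (m n k l c : nat) (w : vtx) : nat :=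
  size [seq u <- box m n | inC m n k l c u && sadj w u].

Definition joined_avoiding (m n k l c : nat) (P : pred vtx) (u w : vtx) : Prop :=
  exists p : seq vtx, [/\ path sadj u p, last u p = w &
     all (fun x => inC m n k l c x && ~~ P x) p].

Definition disconnected_without (m n k l c : nat) (P : pred vtx) : Prop :=
  exists u w : vtx, [/\ inC m n k l c u, ~~ P u, inC m n k l c w, ~~ P w &
     ~ joined_avoiding m n k l c P u w].

Definition cut_vertex (m n k l c : nat) (v : vtx) : Prop :=
  inC m n k l c v /\ disconnected_without m n k l c (pred1 v).

Definition vertex_cut2 (m n k l c : nat) (s t : vtx) : Prop :=
  disconnected_without m n k l c (pred2 s t).

Definition ham_path (m n k l c : nat) (s t : vtx) : Prop :=
  exists p : seq vtx, [/\ path sadj s p, last s p = t, uniq (s :: p) &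
     forall v, inC m n k l c v = (v \in s :: p)].

Definition F1 m n k l c (s t : vtx) : Prop :=
  cut_vertex m n k l c s \/ cut_vertex m n k l c t \/ vertex_cut2 m n k l c s t.

Definition F3 m n k l c (s t : vtx) : Prop :=
  exists w, [/\ inC m n k l c w, degC m n k l c w = 1, w != s & w != t].

Definition F9 m k l c (s t : vtx) : Prop :=
  m - k = 1 /\ ((s.2 <= c /\ t.2 <= c) \/ (c + l < s.2 /\ c + l < t.2)).

(* When a = 1 the vertices (1,y) with c < y <= c+l form a corridor of width one, each of
   them a cut vertex, so by (F1) and (F9) one of s, t lies in the bottom block
   [1..m] x [1..c] and the other in the top block [1..m] x [c+l+1..n].  A Hamiltonian path
   of the bottom block from s ending at (1,c) or (2,c), the corridor traversed upwards, and
   a Hamiltonian path of the top block from (1,c+l+1) or (2,c+l+1) to t concatenate to a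
   Hamiltonian path of C.  Such block paths exist for every endpoint once the block has
   two rows; a block made of a single row of length at least 3 must be traversed from its
   right end, and (F3) puts s or t there because that end then has degree one. *)

From mathcomp Require Import all_boot zify.

Definition hampath (P : pred vtx) (s t : vtx) : Prop :=
  exists p : seq vtx, [/\ path sadj s p, last s p = t, uniq (s :: p) &
     forall v, P v = (v \in s :: p)].

Definition rect (x0 x1 y0 y1 : nat) : pred vtx :=
  fun v => (x0 <= v.1 <= x1) && (y0 <= v.2 <= y1).

Ltac grid_arith := rewrite /rect /sadj /= ?xpair_eqE; lia.
Ltac grid_lia := first [ move=> [? ?]; grid_arith | grid_arith ].

Lemma sadjC : symmetric sadj.
Proof. by move=> [a b] [c d]; rewrite /sadj /= !xpair_eqE; lia. Qed.

Lemma eq_hampath (P Q : pred vtx) s t : P =1 Q -> hampath P s t -> hampath Q s t.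
Proof. by move=> PQ [p [ps pt pu pP]]; exists p; split=> // v; rewrite -PQ; apply: pP. Qed.
Arguments eq_hampath {P Q s t}.

Lemma hampath_eq (P : pred vtx) s t s' t' :
  hampath P s t -> s' == s -> t' == t -> hampath P s' t'.
Proof. by move=> H /eqP -> /eqP ->. Qed.
Arguments hampath_eq {P s t s' t'}.

Lemma hampath1 s : hampath (pred1 s) s s.
Proof. by exists [::]; split=> // v; rewrite mem_seq1. Qed.

Lemma hampath_cat (P Q : pred vtx) s u v t :
  hampath P s u -> hampath Q v t -> sadj u v -> (forall x, P x -> Q x -> False) ->
  hampath (predU P Q) s t.
Proof.
move=> [p [ps pu p_uniq pP]] [q [qv qt q_uniq qQ]] uv PQ.
exists (p ++ v :: q); split.
- by rewrite cat_path ps pu /= uv qv.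
- by rewrite last_cat pu.
- rewrite -cat_cons cat_uniq p_uniq q_uniq andbT; apply/hasPn => x xq.
  by apply/negP => xp; apply: (PQ x); [rewrite pP | rewrite qQ].
- by move=> x; rewrite /= pP qQ -cat_cons mem_cat.
Qed.
Arguments hampath_cat {P Q s u v t}.

Lemma hampath_rev (P : pred vtx) s t : hampath P s t -> hampath P t s.
Proof.
move=> [p [ps pt p_uniq pP]].
have rev_p : t :: rev (belast s p) = rev (s :: p) by rewrite [s :: p]lastI rev_rcons pt.
exists (rev (belast s p)); split.
- by rewrite -pt rev_path (@eq_path _ _ sadj) // => x y; apply: sadjC.
- by have : last t (t :: rev (belast s p)) = s by rewrite rev_p rev_cons last_rcons.
- by rewrite rev_p rev_uniq.
- by move=> x; rewrite rev_p mem_rev pP.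
Qed.
Arguments hampath_rev {P s t}.

Lemma hampath_map (f : vtx -> vtx) (P Q : pred vtx) s t :
  {in P &, forall u v, sadj (f u) (f v) = sadj u v} -> {in P &, injective f} ->
  (forall w, Q w -> exists2 v, P v & f v = w) -> (forall v, P v -> Q (f v)) ->
  hampath P s t -> hampath Q (f s) (f t).
Proof.
move=> f_adj f_inj f_onto f_into [p [ps pt p_uniq pP]].
have all_P : all P (s :: p) by apply/allP => x; rewrite pP.
exists (map f p); split.
- rewrite path_map; elim: p s ps all_P {pt p_uniq pP} => [|y p IH] x //=.
  move=> /andP [xy yp] /and3P [Px Py Pp].
  by rewrite f_adj // xy /= IH //= Py.
- by rewrite last_map pt.
- rewrite -map_cons map_inj_in_uniq // => x y xi yi.
  by apply: f_inj; rewrite unfold_in /= pP.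
- move=> w; rewrite -map_cons; apply/idP/mapP => [/f_onto [v Pv <-] | [v vi ->]].
  + by exists v; rewrite -?pP.
  + by apply: f_into; rewrite pP.
Qed.
Arguments hampath_map f {P Q s t}.

(* [hampath_cat] up to the description of the vertex set and of the endpoints, so that
   every side condition of a concatenation is a linear arithmetic fact. *)
Lemma hampath_join (P Q R : pred vtx) s u v t s' t' :
  hampath P s u -> hampath Q v t -> sadj u v ->
  (forall x, P x -> Q x -> False) -> (forall x, R x = P x || Q x) ->
  s' == s -> t' == t -> hampath R s' t'.
Proof.
move=> HP HQ uv PQ R_PQ ss' tt'; apply: (hampath_eq _ ss' tt').
by apply: (eq_hampath _ (hampath_cat HP HQ uv PQ)) => x; rewrite R_PQ.
Qed.
Arguments hampath_join {P Q R s u v t s' t'}.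

Lemma hampath_row x0 x1 y : x0 <= x1 -> hampath (rect x0 x1 y y) (x1, y) (x0, y).
Proof.
move=> le_x; rewrite -(subnKC le_x); elim: (x1 - x0) => [|d IH].
- by rewrite addn0; apply: (eq_hampath _ (hampath1 _)); grid_lia.
- by apply: (hampath_join (hampath1 (x0 + d.+1, y)) IH); grid_lia.
Qed.

Lemma hampath_col x y0 y1 : y0 <= y1 -> hampath (rect x x y0 y1) (x, y1) (x, y0).
Proof.
move=> le_y; rewrite -(subnKC le_y); elim: (y1 - y0) => [|d IH].
- by rewrite addn0; apply: (eq_hampath _ (hampath1 _)); grid_lia.
- by apply: (hampath_join (hampath1 (x, y0 + d.+1)) IH); grid_lia.
Qed.

(* The two rows are swept column by column; this needs the diagonal edges. *)
Lemma hampath_two_rows x0 x1 y :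
  x0 <= x1 -> hampath (rect x0 x1 y y.+1) (x1, y) (x0, y.+1).
Proof.
move=> le_x; rewrite -(subnKC le_x); elim: (x1 - x0) => [|d IH].
- by apply: (hampath_join (hampath1 (x0, y)) (hampath1 (x0, y.+1))); grid_lia.
- apply: (hampath_join (hampath_cat (hampath1 (x0 + d.+1, y))
                                    (hampath1 (x0 + d.+1, y.+1)) _ _) IH); grid_lia.
Qed.

Lemma hampath_rect_SE_NW x0 x1 y0 y1 :
  x0 <= x1 -> y0 <= y1 -> hampath (rect x0 x1 y0 y1) (x1, y0) (x0, y1).
Proof.
move=> le_x le_y; rewrite -(subnKC le_y); move: (y1 - y0) => h {le_y y1}.
elim/ltn_ind: h y0 => -[|[|h]] IH y0.
- by rewrite addn0; apply: hampath_row.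
- by rewrite addn1; apply: hampath_two_rows.
- apply: (hampath_join (hampath_cat (hampath_row x0 x1 y0 le_x)
                                    (hampath_rev (hampath_row x0 x1 y0.+1 le_x)) _ _)
                       (IH h _ y0.+2)); grid_lia.
Qed.

Lemma hampath_mirror_x x0 x1 y0 y1 s t : hampath (rect x0 x1 y0 y1) s t ->
  hampath (rect x0 x1 y0 y1) (x0 + x1 - s.1, s.2) (x0 + x1 - t.1, t.2).
Proof.
apply: (hampath_map (fun v => (x0 + x1 - v.1, v.2))).
- by move=> [a b] [c d]; rewrite !unfold_in; grid_arith.
- by move=> [a b] [c d]; rewrite !unfold_in /rect /= => ? ? [? ?]; congr pair; lia.
- move=> [a b] ab; exists (x0 + x1 - a, b); move: ab; first by grid_arith.
  by rewrite /rect /= => ?; congr pair; lia.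
- by move=> [a b]; grid_arith.
Qed.
Arguments hampath_mirror_x {x0 x1 y0 y1 s t}.

Lemma hampath_mirror_y x0 x1 y0 y1 s t : hampath (rect x0 x1 y0 y1) s t ->
  hampath (rect x0 x1 y0 y1) (s.1, y0 + y1 - s.2) (t.1, y0 + y1 - t.2).
Proof.
apply: (hampath_map (fun v => (v.1, y0 + y1 - v.2))).
- by move=> [a b] [c d]; rewrite !unfold_in; grid_arith.
- by move=> [a b] [c d]; rewrite !unfold_in /rect /= => ? ? [? ?]; congr pair; lia.
- move=> [a b] ab; exists (a, y0 + y1 - b); move: ab; first by grid_arith.
  by rewrite /rect /= => ?; congr pair; lia.
- by move=> [a b]; grid_arith.
Qed.
Arguments hampath_mirror_y {x0 x1 y0 y1 s t}.

Lemma hampath_rect_SW_NE x0 x1 y0 y1 :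
  x0 <= x1 -> y0 <= y1 -> hampath (rect x0 x1 y0 y1) (x0, y0) (x1, y1).
Proof.
move=> le_x le_y; have := hampath_mirror_x (hampath_rect_SE_NW x0 x1 y0 y1 le_x le_y).
by move/hampath_eq; apply; grid_arith.
Qed.

Lemma hampath_rect_NW_NE x0 x1 y0 y1 :
  x0 < x1 -> y0 <= y1 -> hampath (rect x0 x1 y0 y1) (x0, y1) (x1, y1).
Proof.
move=> lt_x le_y.
apply: (hampath_join (hampath_col x0 y0 y1 le_y)
                     (hampath_rect_SW_NE x0.+1 x1 y0 y1 lt_x le_y)); grid_lia.
Qed.

Lemma hampath_rect_S_NW x0 x1 y0 y1 sx : x0 < x1 -> y0 < y1 -> x0 <= sx <= x1 ->
  hampath (rect x0 x1 y0 y1) (sx, y0) (x0, y1).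
Proof.
move=> lt_x lt_y sxP; case: (ltnP y0.+1 y1) => y1P.
- have bottom : hampath (rect x0 x1 y0 y0.+1) (sx, y0) (x1, y0.+1).
    case: (ltnP sx x1) => sx_x1.
    + apply: (hampath_join (hampath_cat (hampath_row x0 sx y0 _)
                                        (hampath_rev (hampath_row x0 sx y0.+1 _)) _ _)
                           (hampath_rect_SW_NE sx.+1 x1 y0 y0.+1 _ _)); grid_lia.
    + apply: (hampath_join (hampath_row x0 sx y0 _)
                           (hampath_rev (hampath_row x0 sx y0.+1 _))); grid_lia.
  by apply: (hampath_join bottom (hampath_rect_SE_NW x0 x1 y0.+2 y1 _ _)); grid_lia.
- have east : hampath (rect sx x1 y0 y1) (sx, y0) (sx, y1).
    apply: (hampath_join (hampath_rev (hampath_row sx x1 y0 _)) (hampath_row sx x1 y1 _));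
      grid_lia.
  case: (ltnP x0 sx) => x0_sx.
  + by apply: (hampath_join east (hampath_rect_SE_NW x0 sx.-1 y0 y1 _ _)); grid_lia.
  + by apply: (hampath_eq (eq_hampath _ east)); grid_lia.
Qed.

Lemma hampath_rect_to_NW x0 x1 y0 y1 s : x0 < x1 -> y0 < y1 ->
  rect x0 x1 y0 y1 s -> s != (x0, y1) -> hampath (rect x0 x1 y0 y1) s (x0, y1).
Proof.
case: s => sx sy lt_x lt_y; rewrite /rect /= xpair_eqE => sP s_NW.
case: (leqP sy y0) => [sy_y0 | y0_sy].
  by apply: (hampath_eq (hampath_rect_S_NW x0 x1 y0 y1 sx _ _ _)); grid_arith.
case: (leqP y1 sy) => [y1_sy | sy_y1].
  apply: (hampath_join
            (hampath_cat (hampath_rev (hampath_row sx x1 y1 _))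
                         (hampath_rev (hampath_rect_SW_NE sx x1 y0 y1.-1 _ _)) _ _)
            (hampath_rect_SE_NW x0 sx.-1 y0 y1 _ _)); grid_lia.
have below := hampath_rect_NW_NE x0 x1 y0 sy.-1 lt_x.
case: (ltnP sx x1) => [sx_x1 | x1_sx].
- case: (ltnP sy.+1 y1) => [sy_y1' | y1_sy'].
  + apply: (hampath_join
              (hampath_cat (hampath_cat (hampath_row x0 sx sy _) (below _) _ _)
                           (hampath_row sx.+1 x1 sy _) _ _)
              (hampath_rect_S_NW x0 x1 sy.+1 y1 sx.+1 _ _ _)); grid_lia.
  + apply: (hampath_join
              (hampath_cat (hampath_cat (hampath_row x0 sx sy _) (below _) _ _)
                           (hampath_rect_SE_NW sx.+1 x1 sy y1 _ _) _ _)
              (hampath_row x0 sx y1 _)); grid_lia.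
- apply: (hampath_join
            (hampath_cat (hampath_cat (hampath1 (sx, sy)) (hampath_rev (below _)) _ _)
                         (hampath_rev (hampath_row x0 x1.-1 sy _)) _ _)
            (hampath_rect_SE_NW x0 x1 sy.+1 y1 _ _)); grid_lia.
Qed.

(* A single row of length at least 3 has a Hamiltonian path ending at its left end only
   from its right end, hence the last hypothesis. *)
Lemma hampath_rect_exit_top m y0 y1 s : 2 <= m -> y0 <= y1 -> rect 1 m y0 y1 s ->
  (y0 = y1 -> 3 <= m -> s = (m, y1)) ->
  exists2 e, e \in [:: (1, y1); (2, y1)] & hampath (rect 1 m y0 y1) s e.
Proof.
move=> m2 le_y sP single_row; case: (ltnP y0 y1) => [lt_y | ge_y].
  case: (eqVneq s (1, y1)) => [-> | s_NW].
  - exists (2, y1); first by rewrite !inE eqxx orbT.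
    by apply/hampath_rev/hampath_rect_to_NW; grid_arith.
  - by exists (1, y1); [rewrite inE eqxx | apply: hampath_rect_to_NW].
have y0y1 : y0 = y1 by lia.
subst y1; case: (ltnP 2 m) => [m3 | m_le2].
  rewrite (single_row erefl m3); exists (1, y0); first by rewrite inE eqxx.
  by apply: hampath_row; lia.
have {m_le2} m_eq2 : m = 2 by lia.
subst m; case: s sP {single_row} => sx sy sP; case: (eqVneq sx 1) => [sx1 | sx1].
- exists (2, y0); first by rewrite !inE eqxx orbT.
  by apply: (hampath_eq (hampath_rev (hampath_row 1 2 y0 _))); move: sP sx1; grid_arith.
- exists (1, y0); first by rewrite inE eqxx.
  by apply: (hampath_eq (hampath_row 1 2 y0 _)); move: sP sx1; grid_arith.
Qed.
Arguments hampath_rect_exit_top {m y0 y1 s}.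

Lemma hampath_rect_entry_bottom m y0 y1 t : 2 <= m -> y0 <= y1 -> rect 1 m y0 y1 t ->
  (y0 = y1 -> 3 <= m -> t = (m, y0)) ->
  exists2 e, e \in [:: (1, y0); (2, y0)] & hampath (rect 1 m y0 y1) e t.
Proof.
case: t => tx ty m2 le_y tP single_row.
have tP' : rect 1 m y0 y1 (tx, y0 + y1 - ty) by move: tP; grid_arith.
have single_row' : y0 = y1 -> 3 <= m -> (tx, y0 + y1 - ty) = (m, y1).
  by move=> y0y1 m3; case: (single_row y0y1 m3) => -> ->; congr pair; lia.
have [[ex ey] eP H] := hampath_rect_exit_top m2 le_y tP' single_row'.
exists (ex, y0 + y1 - ey); first by move: eP; rewrite !inE !xpair_eqE; lia.
by apply/hampath_rev/(hampath_eq (hampath_mirror_y H)); move: tP; grid_arith.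
Qed.
Arguments hampath_rect_entry_bottom {m y0 y1 t}.

Lemma box_uniq m n : uniq (box m n).
Proof. by apply: allpairs_uniq; rewrite ?iota_uniq // => -[? ?] [? ?]. Qed.

Lemma inC_box m n k l c v : inC m n k l c v -> v \in box m n.
Proof.
by case: v => x y /and3P [/= xP yP _]; apply: allpairs_f; rewrite mem_iota; lia.
Qed.
Arguments inC_box {m n k l c v}.

Lemma degC_eq1 m n k l c w u0 :
  (forall u, inC m n k l c u && sadj w u = (u == u0)) -> degC m n k l c w = 1.
Proof.
move=> nbr; have /andP [u0C _] : inC m n k l c u0 && sadj w u0 by rewrite nbr.
rewrite /degC size_filter (eq_count nbr).
by rewrite (count_uniq_mem u0 (box_uniq m n)) (inC_box u0C).
Qed.

Lemma degC_corner_bottom m n k l : m - k = 1 -> 1 <= l -> 1 <= n -> 3 <= m ->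
  degC m n k l 1 (m, 1) = 1.
Proof.
move=> a1 l1 n1 m3; apply: (@degC_eq1 _ _ _ _ _ _ (m.-1, 1)) => -[x y].
by rewrite /inC /sadj /= !xpair_eqE; lia.
Qed.

Lemma degC_corner_top m k l c : m - k = 1 -> 1 <= l -> 3 <= m ->
  degC m (c + l).+1 k l c (m, (c + l).+1) = 1.
Proof.
move=> a1 l1 m3; apply: (@degC_eq1 _ _ _ _ _ _ (m.-1, (c + l).+1)) => -[x y].
by rewrite /inC /sadj /= !xpair_eqE; lia.
Qed.

Lemma path_sadj_meets_row Y u p : path sadj u p -> u.2 <= Y <= (last u p).2 ->
  exists2 x, x \in u :: p & x.2 = Y.
Proof.
elim: p u => [|y p IH] u /=; first by move=> _ uY; exists u; [rewrite inE | lia].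
move=> /andP [uy yp] uY; case: (ltnP u.2 Y) => [lt_uY | ge_uY].
- have [|x xp xY] := IH y yp; first by move: uy; rewrite /sadj => /and5P []; lia.
  by exists x; rewrite // inE xp orbT.
- by exists u; [rewrite inE eqxx | lia].
Qed.
Arguments path_sadj_meets_row Y {u p}.

(* A path from (1,1) to (1,n) meets row v.2, whose only vertex in C is v since a = 1. *)
Lemma middle_cut_vertex m n k l c v : 1 <= c -> c + l < n -> m - k = 1 ->
  inC m n k l c v -> c < v.2 <= c + l -> cut_vertex m n k l c v.
Proof.
case: v => vx vy c1 cln a1 vC /= v_mid; split=> //.
exists (1, 1), (1, n); split; rewrite /inC /= ?xpair_eqE; try lia.
move=> [p [pP p_last p_avoid]].
have [|x xp xY] := path_sadj_meets_row vy pP; first by rewrite p_last /=; lia.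
move: xp; rewrite inE => /orP [/eqP x11 | xp]; first by move: xY; rewrite x11 /=; lia.
move: (allP p_avoid x xp); case: x xY {xp} => x y /= ->.
by move: vC; rewrite /inC /= xpair_eqE; lia.
Qed.
Arguments middle_cut_vertex {m n k l c v}.

Lemma inC_split m n k l c : m - k = 1 -> c + l <= n ->
  inC m n k l c =1
  predU (predU (rect 1 m 1 c) (rect 1 1 c.+1 (c + l))) (rect 1 m (c + l).+1 n).
Proof. by move=> a1 cln [x y]; rewrite /inC /rect /=; lia. Qed.
Arguments inC_split {m n k l c}.

Lemma hampath_across m n k l c s t :
  2 <= m -> 1 <= c -> 1 <= l -> c + l < n -> m - k = 1 ->
  inC m n k l c s -> inC m n k l c t -> s.2 <= c -> c + l < t.2 ->
  (forall w, inC m n k l c w -> degC m n k l c w = 1 -> w = s \/ w = t) ->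
  ham_path m n k l c s t.
Proof.
move=> m2 c1 l1 cln a1 sC tC s_bot t_top deg1.
have s_rect : rect 1 m 1 c s by move: sC; rewrite /inC /rect; lia.
have t_rect : rect 1 m (c + l).+1 n t by move: tC; rewrite /inC /rect; lia.
have s_end : 1 = c -> 3 <= m -> s = (m, c).
  move=> c_eq1 m3; subst c.
  have [||//|t_corner] := deg1 (m, 1); first by rewrite /inC /=; lia.
    by apply: degC_corner_bottom; lia.
  by move: t_top; rewrite -t_corner /=; lia.
have t_end : (c + l).+1 = n -> 3 <= m -> t = (m, (c + l).+1).
  move=> n_eq m3; subst n.
  have [||s_corner|//] := deg1 (m, (c + l).+1); first by rewrite /inC /=; lia.
    exact: degC_corner_top.
  by move: s_bot; rewrite -s_corner /=; lia.
have [[x1 y1] e1P H1] := hampath_rect_exit_top m2 c1 s_rect s_end.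
have [[x2 y2] e2P H2] := hampath_rect_entry_bottom m2 cln t_rect t_end.
move: e1P e2P; rewrite !inE !xpair_eqE => e1P e2P.
have corridor := hampath_rev (hampath_col 1 c.+1 (c + l) ltac:(lia)).
change (hampath (inC m n k l c) s t).
apply: (eq_hampath (fsym (inC_split a1 (ltnW cln)))).
by apply: (hampath_cat (hampath_cat H1 corridor _ _) H2); grid_lia.
Qed.

Theorem lemma8 (m n k l c : nat) (s t : vtx) :
  2 <= m -> 3 <= n -> 1 <= k -> 1 <= l -> 1 <= c ->
  1 <= n - l - c -> 1 <= m - k ->
  m - k = 1 ->
  inC m n k l c s -> inC m n k l c t -> s != t -> s.1 <= t.1 ->
  ~ F1 m n k l c s t -> ~ F3 m n k l c s t -> ~ F9 m k l c s t ->
  ham_path m n k l c s t.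
Proof.
move=> m2 _ _ l1 c1 d1 _ a1 sC tC _ _ nF1 nF3 nF9.
have cln : c + l < n by lia.
have s_out : ~ (c < s.2 <= c + l).
  by move=> /(middle_cut_vertex c1 cln a1 sC) s_cut; apply: nF1; left.
have t_out : ~ (c < t.2 <= c + l).
  by move=> /(middle_cut_vertex c1 cln a1 tC) t_cut; apply: nF1; right; left.
have deg1 w : inC m n k l c w -> degC m n k l c w = 1 -> w = s \/ w = t.
  move=> wC w1; case: (eqVneq w s) => [|ws]; first by left.
  by case: (eqVneq w t) => [|wt]; [right | case: nF3; exists w].
have [[s_bot t_top] | [t_bot s_top]] : s.2 <= c /\ c + l < t.2 \/ t.2 <= c /\ c + l < s.2.
  by move: nF9 s_out t_out; rewrite /F9; lia.
- exact: hampath_across.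
- apply: hampath_rev; apply: hampath_across => // w wC /(deg1 w wC).
  by rewrite or_comm.
Qed.
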